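(* Let $M\subseteq[r]^d$ be a dot array satisfying (P2') and (P3). If $\mathbf x,\mathbf y\in M$ and $i\ne j$ are indices with $x_i>y_i$ and $x_j=y_j$, then there exists $\mathbf b\in M$ with $b_i=y_i$ and $b_j>y_j$.
   Context: $[r]=\{0,\dots,r\}$ and a dot array is a subset of $[r]^d$; for an element $\mathbf w$, $w_i$ (or $w_{k,i}$ for $\mathbf w_k$) denotes its $i$-th coordinate. (P2') for any distinct $i,j\in\{1,\dots,d\}$ and all integers $r_i,r_j\ge0$ with $r_i+r_j=r$, there are $\mathbf z,\mathbf w_1,\dots,\mathbf w_{r_i},\mathbf u_1,\dots,\mathbf u_{r_j}\in M$ with: (a) $w_{1,i}<\dots<w_{r_i,i}<z_i$; (b) $u_{1,j}<\dots<u_{r_j,j}<z_j$; (c) $u_{k,j}<w_{k',j}$ for all $k,k'$. (P3) every set $S$ of $r+2$ elements of $M$ contains a subset $S'$ (with at least two elements) such that for every $1\le i\le d$ the value $\min\{x_i:\mathbf x\in S'\}$ is attained by at least two elements of $S'$. *)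

From mathcomp Require Import all_boot.
Set Implicit Arguments. Unset Strict Implicit. Unset Printing Implicit Defensive.

(* Points of [r]^d, [r] = {0,...,r}; coordinates indexed by 'I_d
   (coordinate i of the paper, 1 <= i <= d, is index i-1 here). *)
Definition point (r d : nat) := {ffun 'I_d -> 'I_r.+1}.

Definition coord r d (x : point r d) (i : 'I_d) : nat := nat_of_ord (x i).

Definition dot_array (r d : nat) := {set point r d}.

Definition P2' (r d : nat) (M : dot_array r d) : Prop :=
  forall (i j : 'I_d), i != j ->
  forall ri rj : nat, ri + rj = r ->
  exists (z : point r d) (w : 'I_ri -> point r d) (u : 'I_rj -> point r d),
    [/\ z \in M, (forall k, w k \in M) /\ (forall k, u k \in M),
        (forall k k' : 'I_ri, k < k' -> coord (w k) i < coord (w k') i) /\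
        (forall k : 'I_ri, coord (w k) i < coord z i),
        (forall k k' : 'I_rj, k < k' -> coord (u k) j < coord (u k') j) /\
        (forall k : 'I_rj, coord (u k) j < coord z j)
      &
        forall (k : 'I_rj) (k' : 'I_ri), coord (u k) j < coord (w k') j].

Definition P3 (r d : nat) (M : dot_array r d) : Prop :=
  forall S : {set point r d}, S \subset M -> #|S| = r.+2 ->
  exists S' : {set point r d}, [/\ S' \subset S, 2 <= #|S'| &
    forall i : 'I_d,
      exists x y, [/\ x \in S', y \in S', x != y, coord x i = coord y i &
                     forall z, z \in S' -> coord x i <= coord z i]].

From mathcomp Require Import all_boot zify.

Set Implicit Arguments.
Unset Strict Implicit.
Unset Printing Implicit Defensive.

(* Suppose no point of M sits above y in coordinate j on the hyperplane b_i = y_i,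
   and put c = y_j.  Applying (P2') with (r_i, r_j) = (0, r) gives c points of M whose
   j-coordinates are distinct and below c; applying it with (r - c - 1, c + 1) gives
   r - c points whose j-coordinates exceed c and whose i-coordinates are distinct.
   Together with x and y these are r + 2 points, so (P3) yields a subset S' on which
   both coordinatewise minima are attained twice.  The minimum in coordinate j forces
   S' to avoid the low points; the minimum in coordinate i then forces x into S' and
   y out of it (the high points cannot share y_i by assumption); but then x is the
   unique minimizer of coordinate j on S'. *)

Definition min_attained_twice {T : finType} (S : {set T}) (f : T -> nat) :=
  exists x y, [/\ x \in S, y \in S, x != y, f x = f y &
                  forall z, z \in S -> f x <= f z].

Section MinAttainedTwice.

Variables (T : finType) (S : {set T}) (f : T -> nat).
Hypothesis min2 : min_attained_twice S f.

Lemma min_twice_avoids_lower (A : {set T}) :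
  {in A &, injective f} ->
  (forall a b, a \in A -> b \in S -> b \notin A -> f a < f b) ->
  forall a, a \in S -> a \notin A.
Proof.
move: min2 => [m1 [m2 [m1S m2S m12 f12 f_min]]] f_inj f_lt a aS.
apply/negP => aA.
have below_a m : m \in S -> f m <= f a -> m \in A.
  by move=> mS le_ma; apply/negPn/negP => mA; have := f_lt a m aA mS mA; lia.
have m1A := below_a m1 m1S (f_min a aS).
have m2A : m2 \in A by apply: below_a; rewrite // -f12 f_min.
by rewrite (f_inj _ _ m1A m2A f12) eqxx in m12.
Qed.

Lemma min_twice_attained_at (x : T) :
  {in S :\ x &, injective f} -> x \in S /\ forall z, z \in S -> f x <= f z.
Proof.
move: min2 => [m1 [m2 [m1S m2S m12 f12 f_min]]] f_inj.
have [<-|m1x] := eqVneq m1 x; first by [].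
have [<-|m2x] := eqVneq m2 x; first by split=> // z /f_min; rewrite f12.
have m1Sx : m1 \in S :\ x by rewrite !inE m1x.
have m2Sx : m2 \in S :\ x by rewrite !inE m2x.
by rewrite (f_inj _ _ m1Sx m2Sx f12) eqxx in m12.
Qed.

End MinAttainedTwice.

Lemma setI0_separated (T : finType) (A B : {set T}) (f : T -> nat) :
  (forall a b, a \in A -> b \in B -> f a < f b) -> A :&: B = set0.
Proof.
move=> f_lt; apply/setP => p; rewrite !inE.
by apply/negP => /andP [pA pB]; have := f_lt p p pA pB; rewrite ltnn.
Qed.

Section IncreasingOrdinalFamily.

Variables (n : nat) (f : 'I_n -> nat).
Hypothesis f_incr : forall k k' : 'I_n, k < k' -> f k < f k'.

Lemma incr_ord_inj : injective f.
Proof.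
move=> k k' fkk'; apply: val_inj; case: (ltngtP k k') => // [lt_kk'|lt_k'k].
  by have := f_incr lt_kk'; rewrite fkk' ltnn.
by have := f_incr lt_k'k; rewrite fkk' ltnn.
Qed.

Lemma incr_ord_ge (k : 'I_n) : k <= f k.
Proof.
case: k => m; elim: m => [|m IH] lt_mn //=.
have lt_m := ltnW lt_mn.
exact: leq_ltn_trans (IH lt_m) (@f_incr (Ordinal lt_m) (Ordinal lt_mn) (ltnSn m)).
Qed.

Lemma incr_ord_bounded (B : nat) :
  (forall k, f k < B) -> forall k : 'I_n, f k + (n - k) <= B.
Proof.
move=> f_lt k.
suff gap e (k' : 'I_n) : n - k' = e.+1 -> f k' + e.+1 <= B.
  by have := gap (n - k).-1 k; rewrite prednK ?subn_gt0 ?ltn_ord //; apply.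
elim: e k' => [|e IH] k' nk'; first by rewrite addn1 f_lt.
have lt_k'n : k'.+1 < n by lia.
have := IH (Ordinal lt_k'n) ltac:(rewrite /=; lia).
have := @f_incr k' (Ordinal lt_k'n) (ltnSn k'); lia.
Qed.

End IncreasingOrdinalFamily.

Lemma incr_family_set r d n (g : 'I_n -> point r d) (l : 'I_d) :
  (forall k k' : 'I_n, k < k' -> coord (g k) l < coord (g k') l) ->
  #|[set g k | k : 'I_n]| = n /\
  {in [set g k | k : 'I_n] &, injective (fun p => coord p l)}.
Proof.
move=> g_incr; have gl_inj := incr_ord_inj g_incr.
have g_inj : injective g by move=> k k' /(congr1 (fun p => coord p l)) /gl_inj.
split; first by rewrite card_imset // card_ord.
by move=> _ _ /imsetP [k _ ->] /imsetP [k' _ ->] /gl_inj ->.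
Qed.

Section ChainsFromP2'.

Variables (r d : nat) (M : dot_array r d) (i j : 'I_d).
Hypotheses (hP2 : P2' M) (nij : i != j).
Variables (c : nat) (le_cr : c <= r).

Lemma P2'_low_chain :
  exists K : {set point r d}, [/\ K \subset M, #|K| = c,
    {in K, forall p, coord p j < c} & {in K &, injective (fun p => coord p j)}].
Proof.
have [z [_ [u [_ [_ uM] _ [u_incr u_lt_z] _]]]] := hP2 nij (add0n r).
have z_le_r : coord z j <= r by rewrite -ltnS ltn_ord.
have u_le k : coord (u k) j <= k.
  by have := incr_ord_bounded u_incr u_lt_z k; have := ltn_ord k; lia.
pose v (k : 'I_c) := u (widen_ord le_cr k).
have v_incr (k k' : 'I_c) : k < k' -> coord (v k) j < coord (v k') j.
  exact: (u_incr (widen_ord le_cr k) (widen_ord le_cr k')).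
have [cardK K_inj] := incr_family_set v_incr.
exists [set v k | k : 'I_c]; split=> //.
  by apply/subsetP => _ /imsetP [k _ ->]; apply: uM.
move=> _ /imsetP [k _ ->].
exact: leq_ltn_trans (u_le (widen_ord le_cr k)) (ltn_ord k).
Qed.

Lemma P2'_high_chain :
  exists P : {set point r d}, [/\ P \subset M, #|P| = r - c,
    {in P, forall p, c < coord p j} & {in P &, injective (fun p => coord p i)}].
Proof.
have [lt_cr|ge_cr] := ltnP c r; last first.
  exists set0; split; [exact: sub0set | rewrite cards0; lia | |];
    by move=> p; rewrite inE.
have split_r : (r - c.+1) + c.+1 = r by lia.
have [z [w [u [zM [wM _] [w_incr w_lt_z] [u_incr u_lt_z] u_lt_w]]]] := hP2 nij split_r.
have u_top : c <= coord (u ord_max) j := incr_ord_ge u_incr ord_max.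
have [card_w w_inj] := incr_family_set w_incr.
have z_notin_w : z \notin [set w k | k : 'I_(r - c.+1)].
  by apply/imsetP => [[k _ ezk]]; have := w_lt_z k; rewrite -ezk ltnn.
exists (z |: [set w k | k : 'I_(r - c.+1)]); split.
- by apply/subsetP => p /setU1P [->|/imsetP [k _ ->]].
- by rewrite cardsU1 z_notin_w card_w; lia.
- move=> p /setU1P [->|/imsetP [k _ ->]].
    by have := u_lt_z ord_max; lia.
  by have := u_lt_w ord_max k; lia.
- have z_above k : coord (w k) i <> coord z i by move=> ewz; have := w_lt_z k; lia.
  move=> p q /setU1P [->|pw] /setU1P [->|qw] //.
  + by case/imsetP: qw => k _ -> /esym /z_above.
  + by case/imsetP: pw => k _ -> /z_above.
  + exact: w_inj.
Qed.

End ChainsFromP2'.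

Section ExtremalSubset.

Variables (r d : nat) (i j : 'I_d) (c : nat) (x y : point r d).
Variables (K P : {set point r d}).
Hypotheses (K_lt : {in K, forall p, coord p j < c})
           (K_inj : {in K &, injective (fun p => coord p j)}).
Hypotheses (P_gt : {in P, forall p, c < coord p j})
           (P_inj : {in P &, injective (fun p => coord p i)}).
Hypothesis P_off_y : {in P, forall p, coord p i != coord y i}.
Hypotheses (xj : coord x j = c) (yj : coord y j = c) (lt_yx_i : coord y i < coord x i).

Lemma card_chains_xy : #|K :|: [set x; y] :|: P| = #|K| + 2 + #|P|.
Proof.
have xy_j p : p \in [set x; y] -> coord p j = c by case/set2P => ->.
rewrite cardsU (setI0_separated (f := fun p => coord p j)) ?cards0 ?subn0; last first.
  by move=> a b aKxy /P_gt; case/setUP: aKxy => [/K_lt|/xy_j ->]; lia.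
rewrite cardsU (setI0_separated (f := fun p => coord p j)) ?cards0 ?subn0; last first.
  by move=> a b /K_lt lt_a /xy_j ->.
by rewrite cards2; case: eqVneq lt_yx_i => // ->; rewrite ltnn.
Qed.

Lemma no_subset_with_double_minima (S' : {set point r d}) :
  S' \subset K :|: [set x; y] :|: P ->
  min_attained_twice S' (fun p => coord p i) ->
  min_attained_twice S' (fun p => coord p j) -> False.
Proof.
move=> /subsetP sub_S' min2_i min2_j.
have S'_cases p : p \in S' -> [\/ p \in K, p = x, p = y | p \in P].
  move=> /sub_S' /setUP [/setUP [pK|/set2P [->|->]]|pP];
    by [apply: Or41 | apply: Or42 | apply: Or43 | apply: Or44].
have S'_off_K : forall p, p \in S' -> p \notin K.
  apply: (min_twice_avoids_lower min2_j K_inj) => a b /K_lt lt_a bS' bK.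
  case: (S'_cases b bS') => [bK'|->|->|/P_gt]; [by rewrite bK' in bK | lia..].
have S'_in p : p \in S' -> [\/ p = x, p = y | p \in P].
  move=> pS'; case: (S'_cases p pS') => [pK|->|->|pP];
    by [move: (S'_off_K p pS'); rewrite pK | apply: Or31 | apply: Or32 | apply: Or33].
have [xS' x_min] : x \in S' /\ forall z, z \in S' -> coord x i <= coord z i.
  apply: (min_twice_attained_at min2_i) => p q /setD1P [px pS'] /setD1P [qx qS'].
  case: (S'_in p pS') px => [->|->|pP]; rewrite ?eqxx //= => _;
  case: (S'_in q qS') qx => [->|->|qP]; rewrite ?eqxx //= => _.
  + by move/esym/eqP; rewrite (negbTE (P_off_y qP)).
  + by move/eqP; rewrite (negbTE (P_off_y pP)).
  + exact: P_inj.
have yS' : y \notin S' by apply/negP => /x_min; lia.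
suff : x \notin [set x] by rewrite set11.
apply: (min_twice_avoids_lower min2_j) xS'.
- by move=> p q /set1P -> /set1P ->.
- move=> a b /set1P -> bS'; rewrite in_set1 xj.
  case: (S'_in b bS') => [->|yE|/P_gt lt_cb _ //]; first by rewrite eqxx.
  by rewrite -yE bS' in yS'.
Qed.

End ExtremalSubset.

Theorem mainTheorem12 (r d : nat) (M : dot_array r d) :
  P2' M -> P3 M ->
  forall (x y : point r d) (i j : 'I_d),
    x \in M -> y \in M -> i != j ->
    coord y i < coord x i -> coord x j = coord y j ->
    exists b : point r d, [/\ b \in M, coord b i = coord y i & coord y j < coord b j].
Proof.
move=> hP2 hP3 x y i j xM yM nij lt_yx_i eq_xy_j.
case: (boolP [exists b, [&& b \in M, coord b i == coord y i & coord y j < coord b j]]).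
  by case/existsP => b /and3P [bM /eqP bi bj]; exists b.
move/existsPn => no_b; exfalso.
have le_cr : coord y j <= r by rewrite -ltnS ltn_ord.
have [K [KM cardK K_lt K_inj]] := P2'_low_chain hP2 nij le_cr.
have [P [PM cardP P_gt P_inj]] := P2'_high_chain hP2 nij le_cr.
have P_off_y : {in P, forall p, coord p i != coord y i}.
  move=> p pP; apply/negP => /eqP pi.
  by have := no_b p; rewrite (subsetP PM p pP) pi eqxx P_gt.
have SM : K :|: [set x; y] :|: P \subset M.
  by rewrite !subUset !sub1set KM PM xM yM.
have cardS : #|K :|: [set x; y] :|: P| = r.+2.
  rewrite (card_chains_xy K_lt P_gt eq_xy_j erefl lt_yx_i) cardK cardP; lia.
have [S' [sub_S' _ min2]] := hP3 _ SM cardS.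
exact: (no_subset_with_double_minima K_lt K_inj P_gt P_inj P_off_y
          eq_xy_j erefl lt_yx_i sub_S' (min2 i) (min2 j)).
Qed.
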